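(* Let $\Sigma$ be a set of constant symbols with $\star\notin\Sigma$, let $W=c_1\cdots c_n$ be a word over $\Sigma$, and let $p=(p_0,\dots,p_n)$ and $q=(q_0,\dots,q_n)$ be two tuples of pairwise distinct constants of $\mathbf P$. For every observation $O\in\mathrm{Matr}_\Sigma(\mathcal O)$, the wiring $O\bar W_p$ is nilpotent if and only if $O\bar W_q$ is nilpotent.
   Context: Terms: first-order terms built from an infinite set of variables, a binary function symbol $\bullet$ written infix (not associative; by convention right-associating, $t\bullet u\bullet v:=t\bullet(u\bullet v)$), infinitely many constant symbols including a distinguished constant $\star$, and for each $n\ge1$ at least one $n$-ary function symbol. $\mathrm{var}(t)$ is the set of variables of $t$. The height of an occurrence of a variable in $t$ is its distance from the root of the tree of $t$. A renaming is a bijective substitution mapping variables to variables. A flow is a pair of terms written $t\leftarrow u$ with $\mathrm{var}(t)\subseteq\mathrm{var}(u)$, considered up to renaming. The product of flows $u\leftarrow v$ and $t\leftarrow w$ (representatives chosen with disjoint variable sets) is defined iff $v$ and $t$ are unifiable, and then equals $u\theta\leftarrow w\theta$ with $\theta$ a most general unifier of $v,t$. A wiring is a finite set of flows, written as a formal sum, with $0$ the empty wiring; product $FG=\{fg: f\in F,g\in G, fg\text{ defined}\}$, $F^n$ the $n$-fold product. $F$ is nilpotent if $F^n=0$ for some $n\in\mathbb N$. A flow $t\leftarrow u$ is balanced if for every variable $x$, all occurrences of $x$ in $t$ and in $u$ have the same height; $\mathcal B$ is the set of wirings all of whose flows are balanced. A semiring is a set of wirings containing $0$ and closed under finite sums (unions)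 and products. Tensor product of flows (variables renamed apart): $(u\leftarrow v)\otimes(t\leftarrow w):=u\bullet t\leftarrow v\bullet w$; extended to wirings by $(\sum_i f_i)\otimes(\sum_j g_j)=\sum_{i,j}f_i\otimes g_j$, and to semirings by $\mathcal A\otimes\mathcal B=\{\sum_i F_i\otimes G_i: F_i\in\mathcal A,G_i\in\mathcal B\}$, right-associating. For a set $E$ of closed terms, $\mathcal C(E)=\{\sum_i t_i\leftarrow u_i: t_i,u_i\in E\}$. For a set of symbols $\mathbf S$ and semiring $\mathcal A$, $\mathcal R_{\mathbf S}(\mathcal A)$ is the set of wirings of $\mathcal A$ not using symbols of $\mathbf S$. Fix disjoint infinite sets of constants $\mathbf P$ (position constants) and $\mathbf S$ (states), a unary function symbol $\mathrm M$, and constants $\mathrm L,\mathrm R$. The observation semiring is $\mathcal O:=\mathcal C(\mathbf S)\otimes\mathcal R_{\mathbf P}(\mathcal B)$. For a set of constants $\Sigma$ and semiring $\mathcal A$, $\mathrm{Matr}_\Sigma(\mathcal A):=\mathcal C(\Sigma\cup\{\star\})\otimes\mathcal C(\{\mathrm L,\mathrm R\})\otimes\mathcal A$. An observation over $\Sigma$ is any element of $\mathrm{Matr}_\Sigma(\mathcal O)$. Word representation: write $t\rightleftarrows u$ for $t\leftarrow u+u\leftarrow t$. For $W=c_1\cdots c_n$ over $\Sigma$ and pairwise distinct $p=(p_0,\dots,p_n)\in\mathbf P^{n+1}$, set $p_{n+1}=p_0$, $c_0=c_{n+1}=\star$, and, with $x,y$ variables, $\bar W_p=\sum_{i=0}^n\big(c_i\bullet\mathrm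 L\bullet x\bullet y\bullet\mathrm M(p_i)\ \rightleftarrows\ c_{i+1}\bullet\mathrm R\bullet x\bullet y\bullet\mathrm M(p_{i+1})\big)$. *)

From Stdlib Require Import List.
Import ListNotations.

(* Constant symbols: the distinguished constant star, the constants L and R,
   the position constants P (CP n), the states S (CS n), and infinitely many
   other constants (CO n). *)
Inductive const : Type :=
  | Star : const
  | CL : const
  | CR : const
  | CP : nat -> const
  | CS : nat -> const
  | CO : nat -> const.

(* Terms: variables (indexed by nat), constants, the binary symbol "•"
   (Dot, written infix in the paper), the unary symbol M, and for each
   arity n >= 1 infinitely many n-ary function symbols Fn f a l
   (symbol (f, 1 + length l), arguments a :: l). *)
Inductive term : Type :=
  | Var : nat -> term
  | Cst : const -> term
  | Dot : term -> term -> term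
  | Mf  : term -> term
  | Fn  : nat -> term -> list term -> term.

Fixpoint tsubst (s : nat -> term) (t : term) : term :=
  match t with
  | Var x => s x
  | Cst c => Cst c
  | Dot a b => Dot (tsubst s a) (tsubst s b)
  | Mf a => Mf (tsubst s a)
  | Fn f a l => Fn f (tsubst s a) (map (tsubst s) l)
  end.

Fixpoint occ_at (x d : nat) (t : term) {struct t} : Prop :=
  match t with
  | Var y => y = x /\ d = 0
  | Cst _ => False
  | Dot a b => match d with 0 => False | S d' => occ_at x d' a \/ occ_at x d' b end
  | Mf a => match d with 0 => False | S d' => occ_at x d' a end
  | Fn _ a l =>
      match d with
      | 0 => False
      | S d' => occ_at x d' a \/
                (fix go (l : list term) : Prop :=
                   match l with [] => False | b :: l' => occ_at x d' b \/ go l' end) l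
      end
  end.

Definition occurs (x : nat) (t : term) : Prop := exists d, occ_at x d t.

Fixpoint hasP (t : term) : Prop :=
  match t with
  | Var _ => False
  | Cst (CP _) => True
  | Cst _ => False
  | Dot a b => hasP a \/ hasP b
  | Mf a => hasP a
  | Fn _ a l => hasP a \/
      (fix go (l : list term) : Prop :=
         match l with [] => False | b :: l' => hasP b \/ go l' end) l
  end.

Definition scomp (th rho : nat -> term) : nat -> term := fun x => tsubst rho (th x).

Definition renaming (r : nat -> term) : Prop :=
  exists pi pinv : nat -> nat,
    (forall x, pinv (pi x) = x) /\ (forall y, pi (pinv y) = y) /\
    (forall x, r x = Var (pi x)).

Definition unifier (th : nat -> term) (s t : term) : Prop := tsubst th s = tsubst th t.

Definition mgu (th : nat -> term) (s t : term) : Prop :=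
  unifier th s t /\
  forall sg, unifier sg s t -> exists rho, forall x, sg x = scomp th rho x.

(* A flow t <- u is represented by the pair (t, u); flows are considered up
   to renaming (all definitions below are invariant under renaming). *)
Definition flow : Type := (term * term)%type.

Definition is_flow (f : flow) : Prop := forall x, occurs x (fst f) -> occurs x (snd f).

Definition occurs_flow (x : nat) (f : flow) : Prop := occurs x (fst f) \/ occurs x (snd f).

Definition rename_flow (r : nat -> term) (f : flow) : flow :=
  (tsubst r (fst f), tsubst r (snd f)).

Definition disjoint_flows (f g : flow) : Prop :=
  forall x, ~ (occurs_flow x f /\ occurs_flow x g).

Definition flow_prod (f g h : flow) : Prop :=
  exists a b th, renaming a /\ renaming b /\
    disjoint_flows (rename_flow a f) (rename_flow b g) /\
    mgu th (snd (rename_flow a f)) (fst (rename_flow b g)) /\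
    h = (tsubst th (fst (rename_flow a f)), tsubst th (snd (rename_flow b g))).

(* A wiring is a finite set of flows (formal sum), represented by a list. *)
Definition wiring : Type := list flow.

Definition inw (W : wiring) : flow -> Prop := fun f => In f W.

Definition wprod (F G : flow -> Prop) : flow -> Prop :=
  fun h => exists f g, F f /\ G g /\ flow_prod f g h.

(* wpow F n = F^(n+1) *)
Fixpoint wpow (F : flow -> Prop) (n : nat) : flow -> Prop :=
  match n with
  | 0 => F
  | S n' => wprod (wpow F n') F
  end.

(* F nilpotent : F^n = 0 for some n (F^0 is the identity, never 0). *)
Definition nilpotent (F : flow -> Prop) : Prop :=
  exists n, forall h, ~ wpow F n h.

Definition balanced (f : flow) : Prop :=
  forall x d1 d2,
    (occ_at x d1 (fst f) \/ occ_at x d1 (snd f)) ->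
    (occ_at x d2 (fst f) \/ occ_at x d2 (snd f)) -> d1 = d2.

(* A "semiring" is represented by its membership predicate on wirings. *)
Definition wset : Type := wiring -> Prop.

Definition Bset : wset := fun W => forall f, In f W -> is_flow f /\ balanced f.

Definition R_P (A : wset) : wset :=
  fun W => A W /\ forall f, In f W -> ~ hasP (fst f) /\ ~ hasP (snd f).

Definition Cset (E : term -> Prop) : wset :=
  fun W => forall f, In f W -> exists t u, E t /\ E u /\ f = (t, u).

Definition flow_tensor (f g h : flow) : Prop :=
  exists a b, renaming a /\ renaming b /\
    disjoint_flows (rename_flow a f) (rename_flow b g) /\
    h = (Dot (fst (rename_flow a f)) (fst (rename_flow b g)),
         Dot (snd (rename_flow a f)) (snd (rename_flow b g))).

Definition wiring_tensor (F G H : wiring) : Prop :=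
  (forall h, In h H -> exists f g, In f F /\ In g G /\ flow_tensor f g h) /\
  (forall f g, In f F -> In g G -> exists h, In h H /\ flow_tensor f g h).

Definition stensor (A B : wset) : wset :=
  fun H => exists (FG : list (wiring * wiring)) (Hs : list wiring),
    Forall2 (fun p Hi => A (fst p) /\ B (snd p) /\ wiring_tensor (fst p) (snd p) Hi) FG Hs /\
    (forall h, In h H <-> In h (concat Hs)).

Definition Obs : wset :=
  stensor (Cset (fun t => exists s, t = Cst (CS s))) (R_P Bset).

Definition Matr (Sigma : const -> Prop) (A : wset) : wset :=
  stensor (Cset (fun t => exists c, (Sigma c \/ c = Star) /\ t = Cst c))
          (stensor (Cset (fun t => t = Cst CL \/ t = Cst CR)) A).

(* W = c_1 ... c_n, p = (p_0, ..., p_n) given by the indices of CP;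
   c_0 = c_(n+1) = star, p_(n+1) = p_0;  x = Var 0, y = Var 1. *)
Definition word_flow_term (c : const) (lr : const) (pi : nat) : term :=
  Dot (Cst c) (Dot (Cst lr) (Dot (Var 0) (Dot (Var 1) (Mf (Cst (CP pi)))))).

Definition word_rep (W : list const) (p : list nat) : wiring :=
  flat_map (fun i =>
     let a := word_flow_term (nth i (Star :: W) Star) CL (nth i p (hd 0 p)) in
     let b := word_flow_term (nth (S i) (Star :: W) Star) CR (nth (S i) p (hd 0 p)) in
     [(a, b); (b, a)])
    (seq 0 (S (length W))).

(* Renaming position constants does not change how an observation interacts
   with a word.  Let g be an involution of the position indices and apply it
   to every position constant lying below the first two components of a term
   (the letter and the L/R tag, which may themselves be arbitrary constants).
   This map commutes with substitutions and preserves variable heights, so it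
   maps most general unifiers to most general unifiers and hence products of
   flows to products of flows.  It fixes every flow of an observation, whose
   third components contain no position constant, and maps the flows of the
   representation of W at p onto those at g(p).  Therefore (O W_p)^n is empty
   iff (O W_{g(p)})^n is.  Given two tuples p and q, an involution exchanging p
   with a block of fresh positions, and one doing the same for q, identify both
   with that block. *)

From Stdlib Require Import List Lia Arith FunctionalExtensionality.
Import ListNotations.

Definition term_ind_nested (P : term -> Prop)
  (HVar : forall x, P (Var x)) (HCst : forall c, P (Cst c))
  (HDot : forall a b, P a -> P b -> P (Dot a b)) (HMf : forall a, P a -> P (Mf a))
  (HFn : forall f a l, P a -> Forall P l -> P (Fn f a l)) : forall t, P t :=
  fix F t := match t with
  | Var x => HVar x
  | Cst c => HCst c
  | Dot a b => HDot a b (F a) (F b)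
  | Mf a => HMf a (F a)
  | Fn f a l => HFn f a l (F a)
      ((fix G l := match l return Forall P l with
                   | [] => Forall_nil _
                   | b :: l' => Forall_cons _ (F b) (G l') end) l)
  end.

Definition relabel_const (g : nat -> nat) (c : const) : const :=
  match c with CP i => CP (g i) | _ => c end.

Fixpoint relabel (g : nat -> nat) (t : term) : term :=
  match t with
  | Var x => Var x
  | Cst c => Cst (relabel_const g c)
  | Dot a b => Dot (relabel g a) (relabel g b)
  | Mf a => Mf (relabel g a)
  | Fn f a l => Fn f (relabel g a) (map (relabel g) l)
  end.

Definition involutive (g : nat -> nat) : Prop := forall k, g (g k) = k.

Lemma relabel_tsubst g s t :
  relabel g (tsubst s t) = tsubst (fun x => relabel g (s x)) (relabel g t).
Proof.
  induction t as [| | | |f a l IHa IHl] using term_ind_nested; simpl; try congruence.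
  f_equal; auto. rewrite !map_map. apply map_ext_in. intros b Hb.
  now rewrite Forall_forall in IHl; apply IHl.
Qed.

Lemma relabel_involutive g t : involutive g -> relabel g (relabel g t) = t.
Proof.
  intro Hg.
  induction t as [|c| | |f a l IHa IHl] using term_ind_nested; simpl; try congruence.
  - destruct c; simpl; try rewrite Hg; reflexivity.
  - f_equal; auto. rewrite map_map. rewrite <- (map_id l) at 2. apply map_ext_in. intros b Hb.
    now rewrite Forall_forall in IHl; apply IHl.
Qed.

Lemma occ_at_relabel g x t d : occ_at x d (relabel g t) <-> occ_at x d t.
Proof.
  revert d.
  induction t as [| |a b IHa IHb|a IHa|f a l IHa IHl] using term_ind_nested;
    intros [|d]; simpl; try tauto.
  - now rewrite IHa, IHb.
  - apply IHa.
  - induction IHl as [|b l IHb _ IHrec]; simpl; rewrite ?IHa in *; [tauto|].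
    rewrite IHb. tauto.
Qed.

Lemma relabel_Pfree g t : ~ hasP t -> relabel g t = t.
Proof.
  induction t as [|c| | |f a l IHa IHl] using term_ind_nested; simpl; intro HP; try tauto.
  - destruct c; simpl in *; tauto.
  - f_equal; tauto.
  - f_equal; tauto.
  - induction IHl as [|b l IHb _ IHrec]; simpl in *; [f_equal; tauto|].
    assert (E : Fn f (relabel g a) (map (relabel g) l) = Fn f a l) by tauto.
    injection E as -> ->. rewrite IHb by tauto. reflexivity.
Qed.

Lemma renaming_relabel g r : renaming r -> (fun x => relabel g (r x)) = r.
Proof.
  intros (pi & pinv & _ & _ & Hr). apply functional_extensionality. intro x.
  now rewrite Hr.
Qed.

Definition relabel_invariant (t : term) : Prop := forall g, relabel g t = t.

Lemma relabel_invariant_renaming r t :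
  renaming r -> relabel_invariant t -> relabel_invariant (tsubst r t).
Proof. intros Hr Ht g. now rewrite relabel_tsubst, renaming_relabel, Ht. Qed.

Definition tagged (t : term) : Prop := exists c l r, t = Dot (Cst c) (Dot (Cst l) r).

Definition tagged_flow (f : flow) : Prop := tagged (fst f) /\ tagged (snd f).

Definition relabel_tail (g : nat -> nat) (t : term) : term :=
  match t with Dot a (Dot b r) => Dot a (Dot b (relabel g r)) | _ => t end.

Definition relabel_tail_flow (g : nat -> nat) (f : flow) : flow :=
  (relabel_tail g (fst f), relabel_tail g (snd f)).

Lemma tagged_tsubst s t : tagged t -> tagged (tsubst s t).
Proof. intros (c & l & r & ->). now exists c, l, (tsubst s r). Qed.

Lemma tagged_relabel_tail g t : tagged t -> tagged (relabel_tail g t).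
Proof. intros (c & l & r & ->). now exists c, l, (relabel g r). Qed.

Lemma relabel_tail_tsubst g s t : tagged t ->
  relabel_tail g (tsubst s t) = tsubst (fun x => relabel g (s x)) (relabel_tail g t).
Proof. intros (c & l & r & ->). simpl. now rewrite relabel_tsubst. Qed.

Lemma relabel_tail_involutive g t : involutive g -> tagged t ->
  relabel_tail g (relabel_tail g t) = t.
Proof. intros Hg (c & l & r & ->). simpl. now rewrite relabel_involutive. Qed.

Lemma occ_at_relabel_tail g x t d : occ_at x d (relabel_tail g t) <-> occ_at x d t.
Proof.
  destruct t as [| |a [| |b r| |]| |]; try reflexivity.
  destruct d as [|[|d]]; simpl; try tauto. now rewrite occ_at_relabel.
Qed.

Lemma occurs_flow_relabel_tail g x f :
  occurs_flow x (relabel_tail_flow g f) <-> occurs_flow x f.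
Proof.
  unfold occurs_flow, occurs, relabel_tail_flow; simpl.
  setoid_rewrite occ_at_relabel_tail. reflexivity.
Qed.

Lemma rename_flow_relabel_tail g r f : renaming r -> tagged_flow f ->
  rename_flow r (relabel_tail_flow g f) = relabel_tail_flow g (rename_flow r f).
Proof.
  intros Hr [H1 H2]. unfold rename_flow, relabel_tail_flow; simpl.
  now rewrite !relabel_tail_tsubst, !renaming_relabel.
Qed.

Lemma mgu_relabel_tail g th s t : involutive g -> tagged s -> tagged t -> mgu th s t ->
  mgu (fun x => relabel g (th x)) (relabel_tail g s) (relabel_tail g t).
Proof.
  intros Hg Hs Ht [Hunif Hgen]. split.
  - unfold unifier. now rewrite <- !relabel_tail_tsubst, Hunif.
  - intros sg Hsg.
    assert (Hunif' : unifier (fun x => relabel g (sg x)) s t).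
    { unfold unifier.
      rewrite <- (relabel_tail_involutive g s), <- (relabel_tail_involutive g t) by auto.
      rewrite <- !relabel_tail_tsubst by now apply tagged_relabel_tail.
      now rewrite Hsg. }
    destruct (Hgen _ Hunif') as [rho Hrho].
    exists (fun x => relabel g (rho x)). intro x. unfold scomp in *.
    now rewrite <- relabel_tsubst, <- Hrho, relabel_involutive.
Qed.

Lemma flow_prod_relabel_tail g f k h : involutive g ->
  tagged_flow f -> tagged_flow k -> flow_prod f k h ->
  tagged_flow h /\
  flow_prod (relabel_tail_flow g f) (relabel_tail_flow g k) (relabel_tail_flow g h).
Proof.
  intros Hg Hf Hk (a & b & th & Ha & Hb & Hdisj & Hmgu & ->).
  assert (Hfa : tagged_flow (rename_flow a f))
    by (split; apply tagged_tsubst; apply Hf).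
  assert (Hkb : tagged_flow (rename_flow b k))
    by (split; apply tagged_tsubst; apply Hk).
  destruct Hfa as [Hfa1 Hfa2], Hkb as [Hkb1 Hkb2].
  split; [split; now apply tagged_tsubst|].
  exists a, b, (fun x => relabel g (th x)).
  rewrite !rename_flow_relabel_tail by auto.
  split; [auto|split; [auto|split; [|split]]].
  - intros x [H1 H2]. apply (Hdisj x).
    now rewrite occurs_flow_relabel_tail in H1, H2.
  - now apply mgu_relabel_tail.
  - unfold relabel_tail_flow; simpl.
    now rewrite (relabel_tail_tsubst g th (tsubst a (fst f))),
                (relabel_tail_tsubst g th (tsubst b (snd k))) by assumption.
Qed.

Lemma Forall2_in_r {A B} (R : A -> B -> Prop) l1 l2 y :
  Forall2 R l1 l2 -> In y l2 -> exists x, In x l1 /\ R x y.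
Proof.
  induction 1 as [|x y' l1 l2 Hxy _ IH]; simpl; [tauto|].
  intros [<-|Hy]; [eauto|].
  destruct (IH Hy) as (z & Hz & Rz); eauto.
Qed.

Lemma in_stensor A B H h : stensor A B H -> In h H ->
  exists F G f k a b, A F /\ B G /\ In f F /\ In k G /\ renaming a /\ renaming b /\
    h = (Dot (tsubst a (fst f)) (tsubst b (fst k)),
         Dot (tsubst a (snd f)) (tsubst b (snd k))).
Proof.
  intros (FG & Hs & HFG & Hunion) Hh.
  apply Hunion, in_concat in Hh as (Hi & HHi & HhHi).
  destruct (Forall2_in_r _ _ _ _ HFG HHi) as ([F G] & _ & HA & HB & [Hten _]).
  destruct (Hten h HhHi) as (f & k & Hf & Hk & (a & b & Ha & Hb & _ & ->)).
  exists F, G, f, k, a, b. repeat split; auto.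
Qed.

Lemma in_Obs H k : Obs H -> In k H ->
  relabel_invariant (fst k) /\ relabel_invariant (snd k).
Proof.
  intros HO Hk.
  destruct (in_stensor _ _ _ _ HO Hk)
    as (F & G & f & k' & a & b & HF & [_ HP] & Hf & Hk' & Ha & Hb & ->).
  destruct (HF f Hf) as (t & u & [s1 ->] & [s2 ->] & ->).
  destruct (HP k' Hk') as [P1 P2].
  split; intro g; simpl; f_equal;
    apply relabel_invariant_renaming; auto; intro; now apply relabel_Pfree.
Qed.

Lemma in_tag_Obs H k :
  stensor (Cset (fun t => t = Cst CL \/ t = Cst CR)) Obs H -> In k H ->
  exists l1 X1 l2 X2, relabel_invariant X1 /\ relabel_invariant X2 /\
    k = (Dot (Cst l1) X1, Dot (Cst l2) X2).
Proof.
  intros HO Hk.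
  destruct (in_stensor _ _ _ _ HO Hk)
    as (F & G & f & k' & a & b & HF & HG & Hf & Hk' & Ha & Hb & ->).
  destruct (HF f Hf) as (t & u & Ht & Hu & ->).
  destruct (in_Obs _ _ HG Hk') as [Fix1 Fix2].
  assert (Htag : forall t, t = Cst CL \/ t = Cst CR -> exists l, tsubst a t = Cst l)
    by (intros t0 [-> | ->]; eexists; reflexivity).
  destruct (Htag t Ht) as [l1 E1], (Htag u Hu) as [l2 E2].
  simpl. rewrite E1, E2. do 4 eexists.
  split; [|split; [|reflexivity]]; now apply relabel_invariant_renaming.
Qed.

Lemma in_Matr_Obs Sigma O f g : Matr Sigma Obs O -> In f O ->
  tagged_flow f /\ relabel_tail_flow g f = f.
Proof.
  intros HO Hf.
  destruct (in_stensor _ _ _ _ HO Hf)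
    as (F & G & f' & k & a & b & HF & HG & Hf' & Hk & Ha & Hb & ->).
  destruct (HF f' Hf') as (t & u & [c1 [_ ->]] & [c2 [_ ->]] & ->).
  destruct (in_tag_Obs _ _ HG Hk) as (l1 & X1 & l2 & X2 & Fix1 & Fix2 & ->).
  simpl. split; [split; do 3 eexists; reflexivity|].
  unfold relabel_tail_flow; simpl.
  rewrite !relabel_tsubst, !renaming_relabel, Fix1, Fix2 by auto. reflexivity.
Qed.

Lemma nth_hd_map (g : nat -> nat) p j : p <> [] ->
  g (nth j p (hd 0 p)) = nth j (map g p) (hd 0 (map g p)).
Proof.
  intro Hp. destruct p as [|a p]; [congruence|]. simpl hd.
  now rewrite <- (map_nth g (a :: p)).
Qed.

Lemma in_word_rep_relabel W p g w : p <> [] -> In w (word_rep W p) ->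
  tagged_flow w /\ In (relabel_tail_flow g w) (word_rep W (map g p)).
Proof.
  intros Hp Hw. unfold word_rep in *.
  apply in_flat_map in Hw as (i & Hi & Hw).
  assert (Htag : forall c lr k, tagged (word_flow_term c lr k))
    by (intros; do 3 eexists; reflexivity).
  split.
  - destruct Hw as [<- | [<- | []]]; split; apply Htag.
  - apply in_flat_map. exists i. split; auto.
    destruct Hw as [<- | [<- | []]]; [left | right; left];
      unfold relabel_tail_flow; simpl; now rewrite !nth_hd_map.
Qed.

Section Transfer.

Variables (Sigma : const -> Prop) (O : wiring) (W : list const) (p : list nat)
  (g : nat -> nat).
Hypotheses (HO : Matr Sigma Obs O) (Hp : p <> []) (Hg : involutive g).

Lemma wprod_relabel_tail h :
  wprod (inw O) (inw (word_rep W p)) h ->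
  tagged_flow h /\ wprod (inw O) (inw (word_rep W (map g p))) (relabel_tail_flow g h).
Proof.
  intros (f & w & Hf & Hw & Hprod).
  destruct (in_Matr_Obs Sigma O f g HO Hf) as [Tf Ef].
  destruct (in_word_rep_relabel W p g w Hp Hw) as [Tw Ew].
  destruct (flow_prod_relabel_tail g f w h Hg Tf Tw Hprod) as [Th Ph].
  split; auto. exists f, (relabel_tail_flow g w). rewrite Ef in Ph. now split.
Qed.

Lemma wpow_relabel_tail n h :
  wpow (wprod (inw O) (inw (word_rep W p))) n h ->
  tagged_flow h /\
  wpow (wprod (inw O) (inw (word_rep W (map g p)))) n (relabel_tail_flow g h).
Proof.
  revert h; induction n as [|n IH]; intros h Hh; [now apply wprod_relabel_tail|].
  destruct Hh as (f & k & Hf & Hk & Hprod).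
  destruct (IH f Hf) as [Tf Pf], (wprod_relabel_tail k Hk) as [Tk Pk].
  destruct (flow_prod_relabel_tail g f k h Hg Tf Tk Hprod) as [Th Ph].
  split; auto. now exists (relabel_tail_flow g f), (relabel_tail_flow g k).
Qed.

Lemma nilpotent_relabel :
  nilpotent (wprod (inw O) (inw (word_rep W (map g p)))) ->
  nilpotent (wprod (inw O) (inw (word_rep W p))).
Proof.
  intros [n Hn]. exists n. intros h Hh.
  exact (Hn _ (proj2 (wpow_relabel_tail n h Hh))).
Qed.

End Transfer.

Lemma map_involutive g p : involutive g -> map g (map g p) = p.
Proof.
  intro Hg. rewrite map_map. rewrite <- (map_id p) at 2. apply map_ext. exact Hg.
Qed.

Lemma nilpotent_relabel_iff Sigma O W p g :
  Matr Sigma Obs O -> p <> [] -> involutive g ->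
  nilpotent (wprod (inw O) (inw (word_rep W p))) <->
  nilpotent (wprod (inw O) (inw (word_rep W (map g p)))).
Proof.
  intros HO Hp Hg. split; [|now apply nilpotent_relabel with Sigma].
  rewrite <- (map_involutive g p Hg) at 1.
  apply nilpotent_relabel with Sigma; auto.
  now destruct p.
Qed.

Fixpoint index_of (k : nat) (l : list nat) : option nat :=
  match l with
  | [] => None
  | a :: l' => if Nat.eqb k a then Some 0 else option_map S (index_of k l')
  end.

Lemma index_of_Some k l i : index_of k l = Some i -> i < length l /\ nth i l 0 = k.
Proof.
  revert i; induction l as [|a l IH]; simpl; intros i H; [discriminate|].
  destruct (Nat.eqb_spec k a) as [->|_].
  - injection H as <-. split; [lia|auto].
  - destruct (index_of k l) as [j|]; simpl in H; [|discriminate].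
    injection H as <-. destruct (IH j eq_refl). split; [lia|auto].
Qed.

Lemma index_of_nth l i : NoDup l -> i < length l -> index_of (nth i l 0) l = Some i.
Proof.
  revert i; induction l as [|a l IH]; simpl; intros i Hd Hi; [lia|].
  inversion Hd as [|? ? Ha Hd']; subst. destruct i as [|i].
  - now rewrite Nat.eqb_refl.
  - destruct (Nat.eqb_spec (nth i l 0) a) as [E|_].
    + exfalso. apply Ha. rewrite <- E. apply nth_In. lia.
    + rewrite IH by (auto; lia). reflexivity.
Qed.

(* Exchanges the i-th entry of p with M + i; everything else is fixed. *)
Definition swap_block (M : nat) (p : list nat) (k : nat) : nat :=
  if Nat.ltb k M then match index_of k p with Some i => M + i | None => k end
  else if Nat.ltb (k - M) (length p) then nth (k - M) p 0 else k.

Section SwapBlock.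

Variables (M : nat) (p : list nat).
Hypotheses (Hnodup : NoDup p) (Hbound : forall x, In x p -> x < M).

Lemma swap_block_involutive : involutive (swap_block M p).
Proof.
  intro k. unfold swap_block.
  destruct (Nat.ltb_spec k M).
  - destruct (index_of k p) as [i|] eqn:E.
    + destruct (index_of_Some _ _ _ E) as [Hi Hn].
      destruct (Nat.ltb_spec (M + i) M); [lia|].
      replace (M + i - M) with i by lia.
      destruct (Nat.ltb_spec i (length p)); [auto|lia].
    + destruct (Nat.ltb_spec k M); [|lia]. now rewrite E.
  - destruct (Nat.ltb_spec (k - M) (length p)).
    + assert (Hin : nth (k - M) p 0 < M) by (apply Hbound, nth_In; auto).
      destruct (Nat.ltb_spec (nth (k - M) p 0) M); [|lia].
      rewrite index_of_nth by auto. lia.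
    + destruct (Nat.ltb_spec k M); [lia|].
      destruct (Nat.ltb_spec (k - M) (length p)); [lia|auto].
Qed.

Lemma map_swap_block : map (swap_block M p) p = seq M (length p).
Proof.
  apply nth_ext with 0 0; rewrite length_map; [now rewrite length_seq|].
  intros i Hi. rewrite nth_indep with (d' := swap_block M p 0) by now rewrite length_map.
  rewrite map_nth, seq_nth by auto. unfold swap_block.
  assert (Hin : nth i p 0 < M) by (apply Hbound, nth_In; auto).
  destruct (Nat.ltb_spec (nth i p 0) M); [|lia]. now rewrite index_of_nth.
Qed.

End SwapBlock.

Theorem mainTheorem9 (Sigma : const -> Prop) (W : list const) (p q : list nat)
  (O : wiring) :
  ~ Sigma Star ->
  Forall Sigma W ->
  length p = S (length W) -> NoDup p ->
  length q = S (length W) -> NoDup q ->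
  Matr Sigma Obs O ->
  (nilpotent (wprod (inw O) (inw (word_rep W p))) <->
   nilpotent (wprod (inw O) (inw (word_rep W q)))).
Proof.
  intros _ _ Hlp Hdp Hlq Hdq HO.
  set (M := S (list_max (p ++ q))).
  assert (HM : forall x, In x (p ++ q) -> x < M).
  { intros x Hx. pose proof (proj1 (list_max_le (p ++ q) _) (le_n _)) as H.
    rewrite Forall_forall in H. specialize (H x Hx). unfold M. lia. }
  assert (Hp : p <> []) by (intros ->; discriminate).
  assert (Hq : q <> []) by (intros ->; discriminate).
  rewrite (nilpotent_relabel_iff Sigma O W p (swap_block M p)),
          (nilpotent_relabel_iff Sigma O W q (swap_block M q)),
          !map_swap_block, Hlp, Hlq by (auto using swap_block_involutive, in_or_app).
  reflexivity.
Qed.
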